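(* For every $n\geq 3$, no quantum behavior for the $n$-cycle scenario is strongly contextual.
   Context: The $n$-cycle scenario has measurements $M_1,\dots,M_n$ with outcomes in $\{0,1\}$ and contexts $\{M_i,M_{i+1}\}$, indices mod $n$. A behavior is a family of probability distributions $p_i$ on $\{0,1\}^2$, $p_i(x,y)$ being the probability that $M_i=x$, $M_{i+1}=y$. It is quantum if there exist a complex separable Hilbert space $\mathcal{H}$, a density operator $\rho$ on $\mathcal{H}$, and for each $i$ orthogonal projectors $P_{i;0},P_{i;1}$ with $P_{i;0}+P_{i;1}=\mathbb{I}$, such that $P_{i;o}$ and $P_{i+1;o'}$ commute for all $i,o,o'$ and $p_i(x,y)=\mathrm{Tr}(P_{i;x}P_{i+1;y}\rho)$. The behavior is strongly contextual if there is no $t\in\{0,1\}^n$ with $p_i(t_i,t_{i+1})>0$ for all $i$. *)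

(* complex numbers C = R[i] over an abstract model R of the reals
   (R : realType, i.e. a complete archimedean ordered field, which is isomorphic
   to the usual reals). *)
From HB Require Import structures.
From mathcomp Require Import all_boot all_order all_algebra.
From mathcomp Require Import reals.
From mathcomp Require Import complex.
Set Implicit Arguments. Unset Strict Implicit. Unset Printing Implicit Defensive.
Import Order.TTheory GRing.Theory Num.Theory.
Local Open Scope ring_scope.
Local Open Scope complex_scope.

Section Hilbert.
Variable R : realType.
Local Notation C := (R[i]).
Variable H : lmodType C.
(* inner product, antilinear in the first and linear in the second argument *)
Variable ip : H -> H -> C.

Definition nsq (x : H) : R := complex.Re (ip x x).

Definition inner_product : Prop :=
  [/\ (forall (a : C) (x y z : H), ip x (a *: y + z) = a * ip x y + ip x z),
      (forall x y : H, ip y x = (ip x y)^*),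
      (forall x : H, 0 <= ip x x) &
      (forall x : H, ip x x = 0 -> x = 0)].

Definition complete_ip : Prop :=
  forall u : nat -> H,
    (forall eps : R, 0 < eps -> exists N : nat, forall m k : nat,
        (N <= m)%N -> (N <= k)%N -> nsq (u m - u k) < eps) ->
    exists x : H, forall eps : R, 0 < eps -> exists N : nat, forall m : nat,
        (N <= m)%N -> nsq (u m - x) < eps.

Definition separable_ip : Prop :=
  exists d : nat -> H, forall (x : H) (eps : R), 0 < eps ->
    exists k : nat, nsq (x - d k) < eps.

Definition separable_hilbert : Prop :=
  [/\ inner_product, complete_ip & separable_ip].

Definition linear_op (A : H -> H) : Prop :=
  forall (a : C) (x y : H), A (a *: x + y) = a *: A x + A y.

Definition bounded_op (A : H -> H) : Prop :=
  exists M : R, forall x : H, nsq (A x) <= M * nsq x.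

Definition self_adjoint (A : H -> H) : Prop :=
  forall x y : H, ip (A x) y = ip x (A y).

Definition orth_projector (P : H -> H) : Prop :=
  [/\ linear_op P, bounded_op P, (forall x, P (P x) = P x) & self_adjoint P].

(* orthonormal basis, indexed by nat; to cover finite dimension, entries may be
   the zero vector ("padding"); the nonzero entries form a maximal
   orthonormal family (= Hilbert basis). *)
Definition orthonormal_basis (e : nat -> H) : Prop :=
  [/\ (forall k, e k = 0 \/ ip (e k) (e k) = 1),
      (forall j k, j <> k -> ip (e j) (e k) = 0) &
      (forall x : H, (forall k, ip (e k) x = 0) -> x = 0)].

Definition series_to (f : nat -> C) (t : C) : Prop :=
  forall eps : R, 0 < eps -> exists N : nat, forall m : nat,
    (N <= m)%N -> `|\sum_(k < m) f k - t| < eps%:C.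

Definition trace_is (e : nat -> H) (A : H -> H) (t : C) : Prop :=
  series_to (fun k => ip (e k) (A (e k))) t.

(* density operator: bounded linear positive operator, trace class with trace 1
   (for a positive operator, the trace sum is basis independent) *)
Definition density_op (e : nat -> H) (rho : H -> H) : Prop :=
  [/\ linear_op rho, bounded_op rho, (forall x, 0 <= ip x (rho x))
    & trace_is e rho 1].

End Hilbert.

(* measurements M_0, ..., M_(n-1) indexed by 'I_n, outcomes in bool = {0,1}
   (false = 0, true = 1); the successor i+1 mod n is [ordS i]. *)

(* a behavior: p i x y = probability that M_i = x and M_(i+1) = y *)
Definition behavior (R : realType) (n : nat) (p : 'I_n -> bool -> bool -> R) : Prop :=
  forall i : 'I_n, (forall x y, 0 <= p i x y) /\
    p i false false + p i false true + p i true false + p i true true = 1.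

Definition quantum_behavior (R : realType) (n : nat)
    (p : 'I_n -> bool -> bool -> R) : Prop :=
  behavior p /\
  exists (H : lmodType (R[i])) (ip : H -> H -> R[i]) (e : nat -> H)
         (rho : H -> H) (P : 'I_n -> bool -> H -> H),
    [/\ separable_hilbert ip,
        orthonormal_basis ip e,
        density_op ip e rho &
        (forall i : 'I_n,
         [/\ (forall o, orth_projector ip (P i o)),
             (forall x, P i false x + P i true x = x),
             (forall o o' x, P i o (P (ordS i) o' x) = P (ordS i) o' (P i o x)) &
             (forall x y, trace_is ip e (fun v => P i x (P (ordS i) y (rho v)))
                                    ((p i x y)%:C)%C)])].

Definition strongly_contextual (R : realType) (n : nat)
    (p : 'I_n -> bool -> bool -> R) : Prop :=
  ~ exists t : 'I_n -> bool, forall i : 'I_n, 0 < p i (t i) (t (ordS i)).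

(* Call a pair of outcomes [(x, y)] at step [i] jointly supported when
   [P i x (P (i+1) y rho)] is not identically zero.  For the commuting projector
   [A = P i x P (i+1) y], [Tr (A rho) = 0] forces [A rho = 0] (compare the diagonals
   of the positive trace-class [rho] in the bases [e] and [(2 A - 1) e]), so jointly
   supported pairs have positive probability, and it suffices to close a walk of
   jointly supported pairs once around the cycle.  Every supported outcome of [M i]
   continues to a jointly supported pair.  If some outcome [y] of [M (i+1)] is jointly
   supported with every supported outcome of [M i], a walk started at [y] closes at
   step [i].  Otherwise every step matches the outcomes of [M i] and [M (i+1)]
   perfectly, with [P i x rho = P (i+1) y rho] along matched pairs; a walk started at
   [a] on [M 0] therefore reaches [M (n-1)] at an outcome [t] with
   [P (n-1) t rho = P 0 a rho], and commutation gives
   [P (n-1) t (P 0 a rho) = P 0 a (P (n-1) t rho) = P 0 a rho <> 0], closing the walk. *)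

From HB Require Import structures.
From mathcomp Require Import all_boot all_order all_algebra.
From mathcomp Require Import reals complex classical_sets.
From mathcomp Require Import ring lra zify.
From Stdlib Require Import Classical.
Set Implicit Arguments. Unset Strict Implicit. Unset Printing Implicit Defensive.
Import Order.TTheory GRing.Theory Num.Theory.
Local Open Scope ring_scope.
Local Open Scope complex_scope.
Local Notation Re := complex.Re.
Local Notation Im := complex.Im.

Section SquaredModulus.
Variable R : realType.
Implicit Types c d : R[i].

Definition sqmod c : R := Re c ^+ 2 + Im c ^+ 2.

Lemma sqmod_ge0 c : 0 <= sqmod c.
Proof. by rewrite addr_ge0 ?sqr_ge0. Qed.

Lemma sqmod_eq0 c : sqmod c = 0 -> c = 0.
Proof.
case: c => a b /eqP; rewrite /sqmod /= paddr_eq0 ?sqr_ge0 // !sqrf_eq0.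
by case/andP => /eqP -> /eqP ->.
Qed.

Lemma mulcJ c : c * c^* = (sqmod c)%:C.
Proof. by case: c => a b; rewrite /sqmod /=; simpc; congr (_ +i* _); ring. Qed.

Lemma sqmodD c d : sqmod (c + d) <= 2 * sqmod c + 2 * sqmod d.
Proof.
case: c d => a b [a' b']; rewrite /sqmod /= -subr_ge0.
have -> : 2 * (a ^+ 2 + b ^+ 2) + 2 * (a' ^+ 2 + b' ^+ 2) - ((a + a') ^+ 2 + (b + b') ^+ 2)
  = (a - a') ^+ 2 + (b - b') ^+ 2 by ring.
by rewrite addr_ge0 ?sqr_ge0.
Qed.

Lemma ge0_complexE (z : R[i]) : 0 <= z -> z = (Re z)%:C.
Proof. by move/ger0_real/RRe_real. Qed.

Lemma gt0_complexE (eps : R[i]) : 0 < eps -> eps = (Re eps)%:C /\ 0 < Re eps.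
Proof. by case: eps => a b; rewrite ltcE /= => /andP [/eqP -> ->]. Qed.

End SquaredModulus.

Section Convergence.
Variable K : numFieldType.
Implicit Types (a b : nat -> K) (l : K).

Definition tends_to a l := forall eps : K, 0 < eps ->
  exists N, forall m, (N <= m)%N -> `|a m - l| < eps.

Lemma eq_tends_to a b l : a =1 b -> tends_to a l -> tends_to b l.
Proof. by move=> eq_ab al eps /al [N aN]; exists N => m /aN; rewrite eq_ab. Qed.

Lemma tends_to_cst l : tends_to (fun=> l) l.
Proof. by move=> eps eps_gt0; exists 0%N => m _; rewrite subrr normr0. Qed.

Lemma tends_toD a b la lb :
  tends_to a la -> tends_to b lb -> tends_to (fun m => a m + b m) (la + lb).
Proof.
move=> al bl eps eps_gt0; have eps2_gt0 : 0 < eps / 2 by rewrite divr_gt0.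
have [[Na aN] [Nb bN]] := (al _ eps2_gt0, bl _ eps2_gt0).
exists (maxn Na Nb) => m; rewrite geq_max => /andP [/aN am /bN bm].
rewrite opprD addrACA (splitr eps).
by apply: le_lt_trans (ler_normD _ _) _; rewrite ltrD.
Qed.

Lemma tends_toMl c a l : tends_to a l -> tends_to (fun m => c * a m) (c * l).
Proof.
move=> al eps eps_gt0; have c1_gt0 : 0 < `|c| + 1 by rewrite ltr_wpDl.
have [N aN] := al _ (divr_gt0 eps_gt0 c1_gt0); exists N => m /aN am.
rewrite -mulrBr normrM (@le_lt_trans _ _ ((`|c| + 1) * `|a m - l|)) //.
  by rewrite ler_wpM2r // lerDl.
by rewrite mulrC -ltr_pdivlMr.
Qed.

Lemma tends_to_sum (I : Type) (r : seq I) (F : I -> nat -> K) (L : I -> K) :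
  (forall i, tends_to (F i) (L i)) ->
  tends_to (fun m => \sum_(i <- r) F i m) (\sum_(i <- r) L i).
Proof.
move=> FL; elim: r => [|i r IHr].
  by rewrite big_nil; apply: eq_tends_to (tends_to_cst 0) => m; rewrite big_nil.
rewrite big_cons; apply: eq_tends_to (tends_toD (FL i) IHr) => m.
by rewrite big_cons.
Qed.

End Convergence.

Lemma ler_tends_to (K : realFieldType) (a b : nat -> K) la lb N :
  tends_to a la -> tends_to b lb -> (forall m, (N <= m)%N -> a m <= b m) -> la <= lb.
Proof.
move=> al bl ab; rewrite leNgt; apply/negP => lt_ba.
have eps_gt0 : 0 < (la - lb) / 2 by rewrite divr_gt0 // subr_gt0.
have [[Na aN] [Nb bN]] := (al _ eps_gt0, bl _ eps_gt0).
pose m := maxn N (maxn Na Nb).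
have /aN am : (Na <= m)%N by rewrite !leq_max leqnn orbT.
have /bN bm : (Nb <= m)%N by rewrite !leq_max leqnn !orbT.
have := ab m (leq_maxl _ _); move: am bm; rewrite !ltr_norml; lra.
Qed.

Section NonnegativeSeries.
Variables (R : realFieldType) (F : nat -> R).
Hypothesis F_ge0 : forall k, 0 <= F k.

Lemma ler_partial_sums K L : (K <= L)%N -> \sum_(k < K) F k <= \sum_(k < L) F k.
Proof.
move=> KL; rewrite -!(big_mkord xpredT) (big_cat_nat (leq0n K) KL) /=.
by rewrite lerDl sumr_ge0.
Qed.

Lemma ler_term_sum k L : (k < L)%N -> F k <= \sum_(j < L) F j.
Proof.
move=> kL; apply: le_trans (ler_partial_sums kL); rewrite big_ord_recr /=.
by rewrite lerDr sumr_ge0.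
Qed.

Lemma ler_partial_sum_limit l K :
  tends_to (fun m => \sum_(k < m) F k) l -> \sum_(k < K) F k <= l.
Proof. by move/(ler_tends_to (tends_to_cst _)); apply=> m; apply: ler_partial_sums. Qed.

End NonnegativeSeries.

Section ComplexConvergence.
Variable R : realType.
Implicit Types (a : nat -> R[i]) (l : R[i]).

Lemma Re_sum (I : Type) (r : seq I) (F : I -> R[i]) :
  Re (\sum_(i <- r) F i) = \sum_(i <- r) Re (F i).
Proof. by elim/big_rec2: _ => // i x y _ <-; rewrite raddfD. Qed.

Lemma tends_to_Re a l : tends_to a l -> tends_to (fun m => Re (a m)) (Re l).
Proof.
move=> al eps eps_gt0; have [N aN] := al eps%:C ltac:(by rewrite ltcR).
exists N => m /aN am; rewrite -ltcR -raddfB; exact: le_lt_trans (normc_ge_Re _) am.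
Qed.

Lemma tends_to_sqmod_le a l (d : nat -> R) :
  tends_to d 0 -> (forall m, sqmod (a m - l) <= d m) -> tends_to a l.
Proof.
move=> d0 ad eps /gt0_complexE [-> eps_gt0].
have [N dN] := d0 _ (exprn_gt0 2 eps_gt0); exists N => m /dN; rewrite subr0 => dm.
rewrite normc_def ltcR -(gtr0_norm eps_gt0) -sqrtr_sqr ltr_sqrt ?exprn_gt0 //.
exact: le_lt_trans (ad m) (le_lt_trans (ler_norm _) dm).
Qed.

Lemma series_tends_to (f : nat -> R[i]) t :
  series_to f t -> tends_to (fun m => \sum_(k < m) f k) t.
Proof. by move=> ft eps /gt0_complexE [-> /ft]. Qed.

End ComplexConvergence.

Section HermitianForm.
Variable R : realType.
Variable H : lmodType R[i].

Definition hermitian_form (b : H -> H -> R[i]) : Prop :=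
  [/\ forall a x y z, b x (a *: y + z) = a * b x y + b x z,
      forall x y, b y x = (b x y)^* &
      forall x, 0 <= b x x].

Variable b : H -> H -> R[i].
Hypothesis hb : hermitian_form b.

Lemma formJ x y : b y x = (b x y)^*.
Proof. by case: hb. Qed.

Lemma form_ge0 x : 0 <= b x x.
Proof. by case: hb. Qed.

Lemma form_real x : b x x = (Re (b x x))%:C.
Proof. exact/ge0_complexE/form_ge0. Qed.

Lemma formDr x y z : b x (y + z) = b x y + b x z.
Proof. by case: hb => lin _ _; have := lin 1 x y z; rewrite scale1r mul1r. Qed.

Lemma form0r x : b x 0 = 0.
Proof. by apply: (addrI (b x 0)); rewrite -formDr !addr0. Qed.

Lemma formZr a x y : b x (a *: y) = a * b x y.
Proof. by case: hb => lin _ _; rewrite -[a *: y]addr0 lin form0r addr0. Qed.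

Lemma formNr x y : b x (- y) = - b x y.
Proof. by rewrite -scaleN1r formZr mulN1r. Qed.

Lemma formBr x y z : b x (y - z) = b x y - b x z.
Proof. by rewrite formDr formNr. Qed.

Lemma formDl x y z : b (y + z) x = b y x + b z x.
Proof. by rewrite formJ formDr rmorphD /= -!formJ. Qed.

Lemma form0l x : b 0 x = 0.
Proof. by rewrite formJ form0r conjc0. Qed.

Lemma formZl a x y : b (a *: y) x = a^* * b y x.
Proof. by rewrite formJ formZr rmorphM /= -formJ. Qed.

Lemma formNl x y : b (- y) x = - b y x.
Proof. by rewrite formJ formNr rmorphN /= -formJ. Qed.

Lemma formBl x y z : b (y - z) x = b y x - b z x.
Proof. by rewrite formDl formNl. Qed.

Lemma form_sumr x (I : Type) (r : seq I) (F : I -> H) :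
  b x (\sum_(i <- r) F i) = \sum_(i <- r) b x (F i).
Proof. by elim/big_rec2: _ => [|i y1 y2 _ <-]; rewrite ?form0r ?formDr. Qed.

Lemma form_suml x (I : Type) (r : seq I) (F : I -> H) :
  b (\sum_(i <- r) F i) x = \sum_(i <- r) b (F i) x.
Proof. by elim/big_rec2: _ => [|i y1 y2 _ <-]; rewrite ?form0l ?formDl. Qed.

Lemma Cauchy_Schwarz u w : sqmod (b u w) <= Re (b u u) * Re (b w w).
Proof.
set c := b u w; set A := Re (b u u); set B := Re (b w w).
have A_ge0 : 0 <= A by rewrite -lecR -form_real form_ge0.
have B_ge0 : 0 <= B by rewrite -lecR -form_real form_ge0.
have quad t : 0 <= B - 2 * t * sqmod c + t ^+ 2 * sqmod c * A.
  have := form_ge0 (w - (t%:C * c) *: u).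
  rewrite formBl !formBr !formZl !formZr (formJ u w) -/c (form_real u) (form_real w) -/A -/B.
  by case: c => c1 c2; rewrite /sqmod lecE /=; simpc => /andP [_]; rewrite /=; lra.
have [s0 | s_neq0] := eqVneq (sqmod c) 0; first by rewrite s0 mulr_ge0.
have [A0 | A_neq0] := eqVneq A 0.
  have := quad ((B + 1) / (2 * sqmod c)); rewrite A0 mulr0 addr0.
  have -> : 2 * ((B + 1) / (2 * sqmod c)) * sqmod c = B + 1 by field.
  lra.
have A_gt0 : 0 < A by rewrite lt_def A_neq0.
have := mulr_ge0 (ltW A_gt0) (quad A^-1).
have -> : A * (B - 2 * A^-1 * sqmod c + A^-1 ^+ 2 * sqmod c * A) = A * B - sqmod c by field.
by rewrite subr_ge0 mulrC.
Qed.

End HermitianForm.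

Lemma linear_opP (R : realType) (H : lmodType R[i]) (L : H -> H) :
  linear_op L -> linear L.
Proof. by move=> hL a x y; rewrite hL. Qed.

Lemma linear_opD (R : realType) (H : lmodType R[i]) (L : H -> H) x y :
  linear_op L -> L (x + y) = L x + L y.
Proof. by move=> hL; have := hL 1 x y; rewrite !scale1r. Qed.

Section InnerProduct.
Variables (R : realType) (H : lmodType R[i]) (ip : H -> H -> R[i]).
Hypothesis hip : inner_product ip.

Lemma inner_product_hermitian : hermitian_form ip.
Proof. by case: hip. Qed.
Let hf := inner_product_hermitian.

Lemma ip_nsq x : ip x x = (nsq ip x)%:C.
Proof. exact: form_real. Qed.

Lemma nsq_ge0 x : 0 <= nsq ip x.
Proof. by rewrite -lecR -ip_nsq form_ge0. Qed.

Lemma nsqN x : nsq ip (- x) = nsq ip x.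
Proof. by rewrite /nsq (formNl hf) (formNr hf) opprK. Qed.

Lemma trace_nonzero e (L : H -> H) t : trace_is ip e L t -> t != 0 -> exists v, L v <> 0.
Proof.
move=> /series_tends_to trL t_neq0; apply: NNPP => L0.
have /trL [N tN] : 0 < `|t| by rewrite normr_gt0.
have := tN N (leqnn N); rewrite big1 ?sub0r ?normrN ?ltxx // => k _.
have -> : L (e k) = 0 by apply: NNPP => Lk; apply: L0; exists (e k).
exact: form0r.
Qed.

Definition parseval_frame (f : nat -> H) :=
  forall x y, tends_to (fun L => \sum_(k < L) ip x (f k) * ip (f k) y) (ip x y).

Lemma parseval_frame_involution (U : H -> H) f : involutive U ->
  (forall x y, ip (U x) y = ip x (U y)) -> parseval_frame f -> parseval_frame (U \o f).
Proof.
move=> UK U_sa f_frame x y; rewrite -[y in ip x y]UK -U_sa.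
by apply: eq_tends_to (f_frame (U x) (U y)) => L; apply: eq_bigr => k _; rewrite !U_sa.
Qed.

Section PositiveOperator.
Variable rho : H -> H.
Hypothesis rho_lin : linear_op rho.
Hypothesis rho_ge0 : forall x, 0 <= ip x (rho x).
HB.instance Definition _ := GRing.isLinear.Build R[i] H H *:%R rho (linear_opP rho_lin).

(* polarization: [ip (x + y) (rho (x + y))] and [ip (x + 'i y) (rho (x + 'i y))] are real *)
Lemma positive_op_hermitian : hermitian_form (fun x y => ip x (rho y)).
Proof.
split=> [a x y z|x y|//]; first by rewrite linearD linearZ /= (formDr hf) (formZr hf).
have := rho_ge0 (x + y); have := rho_ge0 (x + 'i *: y).
rewrite !linearD !linearZ /= !(formDl hf) !(formDr hf) !(formZl hf) !(formZr hf).
rewrite (ge0_complexE (rho_ge0 x)) (ge0_complexE (rho_ge0 y)).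
case: (ip x (rho y)) (ip y (rho x)) => [a1 a2] [b1 b2].
rewrite !lecE /=; simpc; rewrite /= => /andP [/eqP e1 _] /andP [/eqP e2 _].
apply/eqP; rewrite eq_complex /=; apply/andP; split; apply/eqP; lra.
Qed.

Lemma positive_op_kernel z w : ip z (rho z) = 0 -> ip z (rho w) = 0.
Proof.
move=> z0; apply: sqmod_eq0; apply/eqP; rewrite eq_le sqmod_ge0 andbT.
by have := Cauchy_Schwarz positive_op_hermitian z w; rewrite z0 mul0r.
Qed.

End PositiveOperator.
End InnerProduct.

Lemma nondecreasing_bounded_cauchy (R : realType) (s : nat -> R) B :
  (forall m k, (m <= k)%N -> s m <= s k) -> (forall m, s m <= B) ->
  forall eps, 0 < eps -> exists N, forall k, (N <= k)%N -> s k - s N < eps.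
Proof.
move=> s_incr s_le eps eps_gt0.
have hsup : has_sup (range s) by split; [exists (s 0%N), 0%N | exists B => _ [m _ <-]].
have [_ [N _ <-] sN] := sup_adherent eps_gt0 hsup.
exists N => k _; have : s k <= sup (range s) by apply: sup_upper_bound => //; exists k.
lra.
Qed.

Section OrthonormalBasis.
Variables (R : realType) (H : lmodType R[i]) (ip : H -> H -> R[i]).
Hypothesis hip : inner_product ip.
Let hf := inner_product_hermitian hip.
Variable e : nat -> H.
Hypothesis he : orthonormal_basis ip e.
Implicit Types x y : H.

Definition coef x k := ip (e k) x.
Definition expansion x a m := \sum_(a <= k < m) coef x k *: e k.
Definition trunc m x := expansion x 0 m.
Definition bessel_sum x a m := \sum_(a <= k < m) sqmod (coef x k).

Lemma ip_basis j k : ip (e j) (e k) = if k == j then ip (e k) (e k) else 0.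
Proof.
case: eqP => [-> //|/eqP kj]; case: he => _ orth _.
by apply: orth => /eqP; rewrite eq_sym (negbTE kj).
Qed.

(* [e k] is either a unit vector or zero padding *)
Lemma ip_basisM k y : ip (e k) y * ip (e k) (e k) = ip (e k) y.
Proof. by case: he => unit _ _; case: (unit k) => ->; rewrite ?(form0l hf) ?mul0r ?mulr1. Qed.

Lemma coef_expansion x a m j :
  coef (expansion x a m) j = if (a <= j < m)%N then coef x j else 0.
Proof.
rewrite /coef /expansion (form_sumr hf).
under eq_bigr do rewrite (formZr hf) ip_basis (fun_if (fun t => _ * t)) mulr0 ip_basisM.
by rewrite -big_mkcond big_nat1_eq.
Qed.

Lemma ip_expansionl x a m y :
  ip (expansion x a m) y = \sum_(a <= k < m) ip x (e k) * ip (e k) y.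
Proof.
rewrite /expansion (form_suml hf); apply: eq_bigr => k _.
by rewrite (formZl hf) (formJ hf (e k) x).
Qed.

Lemma ip_expansionx x a m : ip (expansion x a m) x = (bessel_sum x a m)%:C.
Proof.
rewrite ip_expansionl /bessel_sum rmorph_sum; apply: eq_bigr => k _.
by rewrite (formJ hf) mulrC mulcJ.
Qed.

Lemma ip_expansion x a m :
  ip (expansion x a m) (expansion x a m) = (bessel_sum x a m)%:C.
Proof.
rewrite -ip_expansionx !ip_expansionl.
by apply: eq_big_nat => k krange; rewrite -/(coef _ k) coef_expansion krange.
Qed.

Lemma nsq_expansion x a m : nsq ip (expansion x a m) = bessel_sum x a m.
Proof. by rewrite /nsq ip_expansion. Qed.

Lemma Bessel x a m : bessel_sum x a m <= nsq ip x.
Proof.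
have := form_ge0 hf (x - expansion x a m).
rewrite (formBl hf) !(formBr hf) ip_expansion ip_expansionx.
rewrite (formJ hf (expansion x a m) x) ip_expansionx.
by rewrite conjc_real (ip_nsq hip) subrr subr0 -rmorphB lecR subr_ge0.
Qed.

Lemma truncB x k m : (k <= m)%N -> trunc m x - trunc k x = expansion x k m.
Proof. by move=> km; rewrite /trunc /expansion (big_cat_nat (leq0n k) km) /= addrC addrK. Qed.

Lemma trunc_cauchy x : forall eps, 0 < eps -> exists N, forall m k,
  (N <= m)%N -> (N <= k)%N -> nsq ip (trunc m x - trunc k x) < eps.
Proof.
pose s m := bessel_sum x 0 m.
have s_split k m : (k <= m)%N -> s m = s k + bessel_sum x k m.
  by move=> km; rewrite /s /bessel_sum (big_cat_nat (leq0n k) km).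
have s_incr k m : (k <= m)%N -> s k <= s m.
  by move=> /s_split ->; rewrite lerDl sumr_ge0 // => i _; apply: sqmod_ge0.
move=> eps /(nondecreasing_bounded_cauchy s_incr (fun m => Bessel x 0 m)) [N sN].
have near k m : (N <= k)%N -> (k <= m)%N -> nsq ip (trunc m x - trunc k x) < eps.
  move=> Nk km; rewrite truncB // nsq_expansion.
  have := sN m (leq_trans Nk km); have := s_incr _ _ Nk; rewrite (s_split k m km); lra.
exists N => m k Nm Nk; have [km|mk] := leqP k m; first exact: near.
by rewrite -opprB (nsqN hip) near // ltnW.
Qed.

Lemma ip_trunc x y m : ip (trunc m x) y = \sum_(k < m) ip x (e k) * ip (e k) y.
Proof. by rewrite ip_expansionl big_mkord. Qed.

Lemma nsq_basis k : nsq ip (e k) <= 1.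
Proof. by case: he => unit _ _; rewrite /nsq; case: (unit k) => ->; rewrite ?(form0l hf). Qed.

Hypothesis hcomp : complete_ip ip.

Lemma tends_to_trunc x : tends_to (fun m => nsq ip (trunc m x - x)) 0.
Proof.
have [z trunc_z] := hcomp (trunc_cauchy x).
have tends_z : tends_to (fun m => nsq ip (trunc m x - z)) 0.
  move=> eps /trunc_z [N zN]; exists N => m /zN; rewrite subr0 ger0_norm //.
  exact: nsq_ge0.
suff xz : x = z by move: tends_z; rewrite -xz.
apply/eqP; rewrite -subr_eq0; apply/eqP; case: he => _ _; apply=> k.
apply: sqmod_eq0; apply/eqP; rewrite eq_le sqmod_ge0 andbT.
apply: (ler_tends_to (tends_to_cst _) tends_z (N := k.+1)) => m km.
have -> : ip (e k) (x - z) = ip (e k) (trunc m x - z).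
  have -> : x - z = (x - trunc m x) + (trunc m x - z) by rewrite addrA subrK.
  by rewrite (formDr hf) (formBr hf) -!/(coef _ k) coef_expansion km subrr add0r.
apply: le_trans (Cauchy_Schwarz hf _ _) _.
by rewrite ler_piMl ?nsq_ge0 ?nsq_basis.
Qed.

Lemma tends_to_ip_trunc x y : tends_to (fun m => ip (trunc m x) y) (ip x y).
Proof.
apply: (tends_to_sqmod_le (d := fun m => nsq ip y * nsq ip (trunc m x - x))).
  by rewrite -(mulr0 (nsq ip y)); apply/tends_toMl/tends_to_trunc.
by move=> m; rewrite -(formBl hf) mulrC Cauchy_Schwarz.
Qed.

Lemma basis_parseval : parseval_frame ip e.
Proof. by move=> x y; apply: eq_tends_to (tends_to_ip_trunc x y) => m; rewrite ip_trunc. Qed.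

End OrthonormalBasis.

Section PositiveTraceClass.
Variables (R : realType) (H : lmodType R[i]) (ip : H -> H -> R[i]).
Hypothesis hip : inner_product ip.
Let hf := inner_product_hermitian hip.
Variable e : nat -> H.
Hypotheses (he : orthonormal_basis ip e) (hcomp : complete_ip ip).
Variable rho : H -> H.
Hypotheses (rho_lin : linear_op rho) (rho_bnd : bounded_op ip rho).
Hypotheses (rho_ge0 : forall x, 0 <= ip x (rho x)) (rho_tr : trace_is ip e rho 1).
HB.instance Definition _ := GRing.isLinear.Build R[i] H H *:%R rho (linear_opP rho_lin).
Local Notation trunc := (trunc ip e).

Lemma Re_ip_rho_ge0 x : 0 <= Re (ip x (rho x)).
Proof. by rewrite -lecR -ge0_complexE. Qed.

Lemma tends_to_ip_rho_trunc y :
  tends_to (fun N => ip (trunc N y) (rho (trunc N y))) (ip y (rho y)).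
Proof.
have [M M_ge0 rhoM] : exists2 M, 0 <= M & forall x, nsq ip (rho x) <= M * nsq ip x.
  case: rho_bnd => M rhoM; exists `|M| => // x.
  by apply: le_trans (rhoM x) _; rewrite ler_wpM2r ?nsq_ge0 ?ler_norm.
apply: (tends_to_sqmod_le (d := fun N => 4 * M * nsq ip y * nsq ip (trunc N y - y))).
  by rewrite -(mulr0 (4 * M * nsq ip y)); apply/tends_toMl/(tends_to_trunc hip he hcomp).
move=> N; set t := trunc N y; set d := t - y.
have -> : ip t (rho t) - ip y (rho y) = ip d (rho t) + ip y (rho d).
  by rewrite (formBl hf) linearB (formBr hf) addrA subrK.
apply: le_trans (sqmodD _ _) _.
have CS1 := Cauchy_Schwarz hf d (rho t); have CS2 := Cauchy_Schwarz hf y (rho d).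
have t_le : nsq ip t <= nsq ip y by rewrite (nsq_expansion hip he) (Bessel hip he).
have := rhoM t; have := rhoM d; have := nsq_ge0 hip d; have := nsq_ge0 hip t.
have := nsq_ge0 hip (rho t); have := nsq_ge0 hip (rho d); have := nsq_ge0 hip y.
nra.
Qed.

Lemma ip_trunc_rho x y N : ip (trunc N x) (rho (trunc N y)) =
  \sum_(i < N) \sum_(j < N) ip x (e i) * ip (e j) y * ip (e i) (rho (e j)).
Proof.
rewrite (ip_trunc hip e); apply: eq_bigr => i _.
rewrite /trunc /expansion linear_sum (form_sumr hf) big_mkord mulr_sumr.
by apply: eq_bigr => j _; rewrite linearZ (formZr hf) mulrCA mulrA [_ * ip x _]mulrC.
Qed.

Lemma sum_basis_rho N : \sum_(i < N) \sum_(j < N) ip (e i) (rho (e j)) * ip (e j) (e i) =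
  \sum_(i < N) ip (e i) (rho (e i)).
Proof.
apply: eq_bigr => i _; rewrite (bigD1 i) //= (ip_basisM hip he) big1 ?addr0 // => j ji.
by rewrite (ip_basis he) eq_sym val_eqE (negbTE ji) mulr0.
Qed.

Lemma trace_partial_le1 N : \sum_(i < N) Re (ip (e i) (rho (e i))) <= 1.
Proof.
apply: (ler_partial_sum_limit (fun i => Re_ip_rho_ge0 (e i))).
by apply: eq_tends_to (tends_to_Re (series_tends_to rho_tr)) => m; rewrite Re_sum.
Qed.

Lemma parseval_frame_trace_le1 f K : parseval_frame ip f ->
  \sum_(k < K) Re (ip (f k) (rho (f k))) <= 1.
Proof.
move=> f_frame.
have lim_N : tends_to (fun N => \sum_(k < K) Re (ip (trunc N (f k)) (rho (trunc N (f k)))))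
    (\sum_(k < K) Re (ip (f k) (rho (f k)))).
  by apply: tends_to_sum => k; apply/tends_to_Re/tends_to_ip_rho_trunc.
apply: (ler_tends_to lim_N (tends_to_cst 1) (N := 0)) => N _.
apply: le_trans (trace_partial_le1 N).
have lim_L : tends_to (fun L => \sum_(k < L) ip (trunc N (f k)) (rho (trunc N (f k))))
    (\sum_(i < N) ip (e i) (rho (e i))).
  rewrite -sum_basis_rho.
  have := tends_to_sum (index_enum 'I_N) (fun i => tends_to_sum (index_enum 'I_N) (fun j =>
    tends_toMl (ip (e i) (rho (e j))) (f_frame (e j) (e i)))).
  apply: eq_tends_to => L; symmetry.
  under eq_bigr do rewrite ip_trunc_rho.
  rewrite exchange_big; apply: eq_bigr => i _; rewrite exchange_big; apply: eq_bigr => j _.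
  by rewrite mulr_sumr; apply: eq_bigr => k _; rewrite mulrC [ip (f k) _ * _]mulrC.
rewrite -[X in _ <= X]Re_sum.
apply: (ler_partial_sum_limit (fun k => Re_ip_rho_ge0 (trunc N (f k)))).
by apply: eq_tends_to (tends_to_Re lim_L) => L; rewrite Re_sum.
Qed.

Section Projector.
Variable A : H -> H.
Hypotheses (A_lin : linear_op A) (A_idem : forall x, A (A x) = A x).
Hypothesis A_sa : self_adjoint ip A.
HB.instance Definition _ := GRing.isLinear.Build R[i] H H *:%R A (linear_opP A_lin).

(* The reflection [U = 2 A - 1] maps [e] to another Parseval frame, so the diagonal of
   [U rho U] sums to at most [Tr rho = 1]; expanding [U rho U] with [Tr (A rho) = 0]
   leaves [4 Tr (A rho A) <= 0]. *)
Let U x := A x + A x - x.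

Let U_involutive : involutive U.
Proof.
move=> x; have AU : A (U x) = A x by rewrite /U linearB linearD /= A_idem addrK.
by rewrite {1}/U AU /U opprB addrC subrK.
Qed.

Let U_sa x y : ip (U x) y = ip x (U y).
Proof. by rewrite /U (formBl hf) (formDl hf) !A_sa (formBr hf) (formDr hf). Qed.

Let Re_ip_rho_U x : Re (ip (U x) (rho (U x))) =
  4 * Re (ip (A x) (rho (A x))) - 4 * Re (ip (A x) (rho x)) + Re (ip x (rho x)).
Proof.
rewrite /U !linearB !linearD (formBl hf) (formDl hf) !(formBr hf) !(formDr hf).
rewrite (formJ (positive_op_hermitian hip rho_lin rho_ge0) (A x) x) /=.
case: (ip (A x) (rho (A x))) (ip (A x) (rho x)) (ip x (rho x)) => [a1 a2] [b1 b2] [c1 c2] /=.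
lra.
Qed.

Lemma projector_trace0 : trace_is ip e (fun v => A (rho v)) 0 -> forall v, A (rho v) = 0.
Proof.
move=> trA.
pose a k := Re (ip (A (e k)) (rho (A (e k)))).
pose b k := Re (ip (A (e k)) (rho (e k))).
pose c k := Re (ip (e k) (rho (e k))).
have b0 : tends_to (fun m => \sum_(k < m) b k) 0.
  apply: eq_tends_to (tends_to_Re (series_tends_to trA)) => m.
  by rewrite Re_sum; apply: eq_bigr => k _; rewrite /b A_sa.
have c1 : tends_to (fun m => \sum_(k < m) c k) 1.
  by apply: eq_tends_to (tends_to_Re (series_tends_to rho_tr)) => m; rewrite Re_sum.
have a_eq0 k0 : a k0 = 0.
  apply/eqP; rewrite eq_le Re_ip_rho_ge0 andbT -(pmulr_rle0 _ (ltr0Sn _ 3)).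
  have lim : tends_to (fun m => 1 + 4 * \sum_(k < m) b k - \sum_(k < m) c k) 0.
    have := tends_toD (tends_toD (tends_to_cst 1) (tends_toMl 4 b0)) (tends_toMl (-1) c1).
    rewrite mulr0 addr0 mulN1r subrr => lim; apply: eq_tends_to lim => m.
    by rewrite mulN1r.
  apply: (ler_tends_to (tends_to_cst _) lim (N := k0.+1)) => m k0m.
  have U_frame := parseval_frame_involution U_involutive U_sa (basis_parseval hip he hcomp).
  have := parseval_frame_trace_le1 m U_frame.
  rewrite (eq_bigr (fun k : 'I_m => 4 * a k - 4 * b k + c k)) => [|k _]; last first.
    exact: Re_ip_rho_U.
  rewrite !big_split /= sumrN -!mulr_sumr.
  have := ler_term_sum (fun k => Re_ip_rho_ge0 (A (e k))) k0m; rewrite -/(a k0).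
  lra.
move=> v; case: he => _ _; apply=> k; rewrite -A_sa.
apply: (positive_op_kernel hip rho_lin rho_ge0).
by rewrite (ge0_complexE (rho_ge0 _)) -/(a k) a_eq0.
Qed.

End Projector.

Lemma commuting_projectors_trace_gt0 (P Q : H -> H) (t : R) :
  orth_projector ip P -> orth_projector ip Q -> (forall x, P (Q x) = Q (P x)) ->
  0 <= t -> trace_is ip e (fun v => P (Q (rho v))) t%:C ->
  (exists v, P (Q (rho v)) <> 0) -> 0 < t.
Proof.
case=> P_lin _ P_idem P_sa [Q_lin _ Q_idem Q_sa] PQ t_ge0 trPQ [v PQv].
rewrite lt_def t_ge0 andbT; apply/eqP => t0; apply: PQv; move: v; rewrite t0 in trPQ.
apply: (@projector_trace0 (fun x => P (Q x)) _ _ _ trPQ) => [a x y|x|x y].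
- by rewrite Q_lin P_lin.
- by rewrite -[Q (P (Q x))]PQ P_idem Q_idem.
- by rewrite P_sa Q_sa PQ.
Qed.

End PositiveTraceClass.

Section CyclicWalk.
Local Open Scope nat_scope.
Variable n : nat.
Hypothesis n_gt0 : 0 < n.
Variables (node : 'I_n -> bool -> Prop) (edge : 'I_n -> bool -> bool -> Prop).
Hypothesis edge_exists : forall i x, node i x -> exists y, edge i x y.
Hypothesis edge_node : forall i x y, edge i x y -> node (ordS i) y.

Definition cyclic_walk (t : 'I_n -> bool) := forall i, edge i (t i) (t (ordS i)).

Let cyc j : 'I_n := Ordinal (ltn_pmod j n_gt0).

Let ordS_cyc j : ordS (cyc j) = cyc j.+1.
Proof. by apply: val_inj; rewrite /= -addn1 modnDml addn1. Qed.

Let walk_exists s a k : node (cyc s) a -> exists u : nat -> bool,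
  [/\ u 0 = a, forall j, j < k -> edge (cyc (s + j)) (u j) (u j.+1) & node (cyc (s + k)) (u k)].
Proof.
move=> sa; elim: k => [|k [u [u0 u_edge u_node]]]; first by exists (fun=> a); rewrite addn0.
have [y ky] := edge_exists u_node.
exists (fun j => if j <= k then u j else y); split=> // [j|].
  rewrite ltnS => jk; rewrite jk; case: ltnP => [/u_edge //|kj].
  by have -> : j = k by apply/eqP; rewrite eqn_leq jk kj.
by rewrite ltnn addnS -ordS_cyc; apply: edge_node ky.
Qed.

(* the position of [i] on the cycle read from [s] *)
Let offset s (i : 'I_n) := (i + (n - s %% n)) %% n.

Let cyc_offset s i : cyc (s + offset s i) = i.
Proof.
apply: val_inj; rewrite /= modnDmr {1}(divn_eq s n) -addnA.
have s_lt := ltn_pmod s n_gt0.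
have -> : s %% n + (i + (n - s %% n)) = i + n by lia.
by rewrite modnMDl modnDr modn_small.
Qed.

Let offset_ordS s i : offset s (ordS i) = (offset s i).+1 %% n.
Proof. by rewrite /offset /= modnDml -[in RHS]addn1 modnDml addn1 addSn. Qed.

Let cyclic_walk_of_closed s u :
  (forall j, j < n.-1 -> edge (cyc (s + j)) (u j) (u j.+1)) ->
  edge (cyc (s + n.-1)) (u n.-1) (u 0) -> exists t, cyclic_walk t.
Proof.
move=> u_edge u_close; exists (fun i => u (offset s i)) => i.
rewrite -{1}(cyc_offset s i) offset_ordS.
have := ltn_pmod (i + (n - s %% n)) n_gt0; rewrite -/(offset s i) => off_lt.
have [off_small|off_last] := ltnP (offset s i) n.-1.
  by rewrite modn_small; [apply: u_edge | lia].
have -> : offset s i = n.-1 by lia.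
by rewrite prednK // modnn.
Qed.

Lemma cyclic_walk_of_tight i y :
  node (ordS i) y -> (forall x, node i x -> edge i x y) -> exists t, cyclic_walk t.
Proof.
move=> iy i_tight; have si : cyc i.+1 = ordS i by apply: val_inj.
have [u [u0 u_edge u_node]] := walk_exists n.-1 (s := i.+1) (a := y) ltac:(by rewrite si).
apply: (cyclic_walk_of_closed u_edge); rewrite u0.
have end_i : cyc (i.+1 + n.-1) = i.
  by apply: val_inj; rewrite /= addSnnS prednK // modnDr modn_small.
by rewrite end_i in u_node *; apply: i_tight.
Qed.

Lemma cyclic_walk_of_invariant (V T : Type) (F : 'I_n -> bool -> V -> T) :
  (forall i x y, edge i x y -> F (ordS i) y =1 F i x) ->
  (forall i x y, node (ordS i) y -> F i x =1 F (ordS i) y -> edge i x y) ->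
  forall i x, node i x -> exists t, cyclic_walk t.
Proof.
move=> F_edge edge_F i x ix.
have si : cyc i = i by apply: val_inj; rewrite /= modn_small.
have [u [u0 u_edge _]] := walk_exists n.-1 (s := i) (a := x) ltac:(by rewrite si).
have F_u j : j <= n.-1 -> F (cyc (i + j)) (u j) =1 F i x.
  elim: j => [_|j IHj jn v]; first by rewrite addn0 si u0.
  rewrite addnS -ordS_cyc (F_edge _ (u j)); first exact: IHj (ltnW jn) v.
  exact: u_edge.
have end_i : ordS (cyc (i + n.-1)) = i.
  by rewrite ordS_cyc -addnS prednK //; apply: val_inj; rewrite /= modnDr modn_small.
apply: (cyclic_walk_of_closed u_edge); rewrite u0; apply: edge_F; rewrite end_i //.
exact: F_u.
Qed.

End CyclicWalk.

Section CommutingProjections.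
Variables (H : zmodType) (n : nat) (P : 'I_n -> bool -> H -> H) (rho : H -> H).
Hypothesis P_add : forall i o x y, P i o (x + y) = P i o x + P i o y.
Hypothesis P_idem : forall i o x, P i o (P i o x) = P i o x.
Hypothesis P_sum : forall i x, P i false x + P i true x = x.
Hypothesis P_comm : forall i o o' x, P i o (P (ordS i) o' x) = P (ordS i) o' (P i o x).

Definition supp i x := exists v, P i x (rho v) <> 0.
Definition joint_supp i x y := exists v, P i x (P (ordS i) y (rho v)) <> 0.
Definition tight i y := supp (ordS i) y /\ forall x, supp i x -> joint_supp i x y.

Let vanishes (f : H -> H) : ~ (exists v, f v <> 0) -> forall v, f v = 0.
Proof. by move=> f_nz v; apply: NNPP => fv; apply: f_nz; exists v. Qed.

Let P0 i o : P i o 0 = 0.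
Proof. by apply: (addrI (P i o 0)); rewrite -P_add !addr0. Qed.

Let P_sum_bool i b x : P i b x + P i (~~ b) x = x.
Proof. by case: b; rewrite // addrC. Qed.

Lemma joint_supp_supp i x y : joint_supp i x y -> supp (ordS i) y.
Proof. by move=> [v xy]; apply: NNPP => /vanishes y0; apply: xy; rewrite y0 P0. Qed.

Lemma joint_supp_exists i x : supp i x -> exists y, joint_supp i x y.
Proof.
move=> [v xv]; apply: NNPP => none; apply: xv.
have xy0 y : P i x (P (ordS i) y (rho v)) = 0 by apply: NNPP => xy; apply: none; exists y, v.
by rewrite -(P_sum (ordS i) (rho v)) P_add !xy0 addr0.
Qed.

Lemma supp_exists i : (exists v, rho v <> 0) -> exists x, supp i x.
Proof.
move=> [v rv]; apply: NNPP => none; apply: rv.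
have x0 x : P i x (rho v) = 0 by apply: NNPP => xv; apply: none; exists x, v.
by rewrite -(P_sum i (rho v)) !x0 addr0.
Qed.

Lemma joint_supp_of_tied i x y :
  supp (ordS i) y -> (forall v, P i x (rho v) = P (ordS i) y (rho v)) -> joint_supp i x y.
Proof. by move=> [v yv] xy; exists v; rewrite P_comm xy P_idem. Qed.

(* Without a tight outcome, joint supports at step [i] form a perfect matching
   between the two outcomes of [M i] and the two outcomes of [M (i + 1)]. *)
Lemma joint_supp_tied i x y : ~ (exists y', tight i y') -> joint_supp i x y ->
  forall v, P (ordS i) y (rho v) = P i x (rho v).
Proof.
move=> not_tight xy.
have flip y' : joint_supp i x y' ->
    supp i (~~ x) /\ forall v, P i (~~ x) (P (ordS i) y' (rho v)) = 0.
  move=> xy'; apply: NNPP => flip_fails; apply: not_tight; exists y'.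
  split=> [|x' x'_supp]; first exact: joint_supp_supp xy'.
  apply: NNPP => x'y'; apply: flip_fails.
  have x'x : x' != x by apply: contra_notN x'y' => /eqP ->.
  have -> : ~~ x = x' by move: x'x; case: (x); case: (x').
  by split=> //; apply: vanishes.
have [[w nxw] nxy0] := flip y xy.
have xny0 v : P i x (P (ordS i) (~~ y) (rho v)) = 0.
  apply: NNPP => xnyv; have [_ nxny0] := flip (~~ y) (ex_intro _ v xnyv).
  by apply: nxw; rewrite -(P_sum_bool (ordS i) y (rho w)) P_add nxy0 nxny0 addr0.
move=> v; rewrite -{1}(P_sum_bool i x (P (ordS i) y (rho v))) nxy0 addr0.
by rewrite -{2}(P_sum_bool (ordS i) y (rho v)) P_add xny0 addr0.
Qed.

Lemma cyclic_walk_supp : (0 < n)%N -> (exists v, rho v <> 0) ->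
  exists t, cyclic_walk joint_supp t.
Proof.
move=> n_gt0 rho_nz.
have [[i [y [iy i_tight]]]|no_tight] := classic (exists i y, tight i y).
  exact: (cyclic_walk_of_tight n_gt0 joint_supp_exists joint_supp_supp iy i_tight).
have [x x_supp] := supp_exists (Ordinal n_gt0) rho_nz.
apply: (cyclic_walk_of_invariant n_gt0 joint_supp_exists joint_supp_supp
  (F := fun i x v => P i x (rho v))) x_supp => [i x' y xy|i x' y y_supp xy].
  by apply: joint_supp_tied xy => -[y' ?]; apply: no_tight; exists i, y'.
exact: joint_supp_of_tied.
Qed.

End CommutingProjections.

Theorem corollary3 (R : realType) (n : nat) (p : 'I_n -> bool -> bool -> R) :
  (3 <= n)%N -> quantum_behavior p -> ~ strongly_contextual p.
Proof.
move=> n_ge3 [p_beh [H [ip [e [rho [P [[hip hcomp _] he [rho_lin rho_bnd rho_ge0 rho_tr] hP]]]]]]].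
have P_proj i o : orth_projector ip (P i o) by case: (hP i).
have P_sum i x : P i false x + P i true x = x by case: (hP i).
have P_comm i o o' x : P i o (P (ordS i) o' x) = P (ordS i) o' (P i o x) by case: (hP i).
have P_tr i x y : trace_is ip e (fun v => P i x (P (ordS i) y (rho v))) (p i x y)%:C.
  by case: (hP i).
have P_add i o x y : P i o (x + y) = P i o x + P i o y by case: (P_proj i o) => /linear_opD.
have P_idem i o x : P i o (P i o x) = P i o x by case: (P_proj i o).
have rho_nz : exists v, rho v <> 0 by apply: (trace_nonzero hip rho_tr); rewrite oner_eq0.
(* the argument only needs a nonempty cycle *)
have n_gt0 : (0 < n)%N by apply: leq_trans n_ge3.
have [t t_walk] := cyclic_walk_supp P_add P_idem P_sum P_comm n_gt0 rho_nz.
apply; exists t => i.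
apply: (commuting_projectors_trace_gt0 hip he hcomp rho_lin rho_bnd rho_ge0 rho_tr
  (P_proj _ _) (P_proj _ _) (P_comm i _ _) _ (P_tr i _ _) (t_walk i)).
by case: (p_beh i).
Qed.
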